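(* In the setting of the adaptive implicit-explicit iteration described in the context, suppose there are $a>0$ and $\eta_{\min}>0$ such that the step size satisfies $0<\eta_{\min}\le\eta\le\frac1{\|\bm T\|+2a}$. Then every limit point $(\bm d_*,\lambda_* )$ of the sequence $\{(\bm d_k,\lambda_k)\}$ is a KKT point of the problem $\min_{\|\bm d\|_2\le r}f(\bm d)$, i.e. it satisfies $\bm g+(\bm H+\lambda_*\bm I)\bm d_*=0$, $\lambda_*\ge0$, $\|\bm d_*\|_2\le r$ and $\lambda_*(\|\bm d_*\|_2-r)=0$.
   Context: Let $n\ge1$, $r>0$, $\bm g\in\mathbb R^n$ with $\bm g\neq0$, and $\bm H=\bm D+\bm T\in\mathbb R^{n\times n}$, where $\bm D$ is diagonal with nonnegative diagonal entries $D_{i,i}$ and $\bm T$ is symmetric; $\|\bm T\|$ is the spectral norm. Let $f(\bm d)=\bm g^\top\bm d+\frac12\bm d^\top\bm H\bm d$. Adaptive implicit-explicit iteration with step size $\eta>0$: set $\bm d_0=-r\bm g/\|\bm g\|_2$ and $\lambda_0=0$. For $k=0,1,2,\dots$ (run indefinitely): let $\bm b_k=\bm d_k-\eta(\bm g+\bm T\bm d_k)$ and $\phi_k(\lambda)=\sum_{i=1}^n\big([\bm b_k]_i/(1+\eta(D_{i,i}+\lambda))\big)^2$; set $\lambda_{k+1}=0$ if $\phi_k(0)\le r^2$, and otherwise let $\lambda_{k+1}>0$ be the solution of $\phi_k(\lambda)=r^2$; then $\bm d_{k+1}=(\bm I+\eta(\bm D+\lambda_{k+1}\bm I))^{-1}\bm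 b_k$. *)

From HB Require Import structures.
From mathcomp Require Import all_boot all_order all_algebra.
From mathcomp Require Import classical_sets reals.
Set Implicit Arguments. Unset Strict Implicit. Unset Printing Implicit Defensive.
Import Order.TTheory GRing.Theory Num.Theory.
Local Open Scope ring_scope.
Local Open Scope classical_set_scope.

Definition norm2 (R : realType) (n : nat) (v : 'cV[R]_n) : R :=
  Num.sqrt (\sum_(i < n) v i ord0 ^+ 2).

Definition specnorm (R : realType) (n : nat) (T : 'M[R]_n) : R :=
  sup [set norm2 (T *m x) | x in [set x : 'cV[R]_n | norm2 x <= 1]].

Definition is_diag_nonneg (R : realType) (n : nat) (D : 'M[R]_n) : Prop :=
  (forall i j : 'I_n, i != j -> D i j = 0) /\ (forall i : 'I_n, 0 <= D i i).

Definition bvec (R : realType) (n : nat) (T : 'M[R]_n) (g : 'cV[R]_n) (eta : R)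
  (d : 'cV[R]_n) : 'cV[R]_n := d - eta *: (g + T *m d).

Definition phi (R : realType) (n : nat) (D : 'M[R]_n) (eta : R) (b : 'cV[R]_n)
  (lam : R) : R :=
  \sum_(i < n) (b i ord0 / (1 + eta * (D i i + lam))) ^+ 2.

(* The sequences (d_k, lambda_k) are exactly the adaptive implicit-explicit
   iterates: since phi is strictly decreasing on [0, oo) when phi(0) > r^2,
   the positive solution of phi(lambda) = r^2 is unique, so this relational
   description determines the sequences uniquely. *)
Definition aie_iterates (R : realType) (n : nat) (D T : 'M[R]_n) (g : 'cV[R]_n)
  (r eta : R) (d : nat -> 'cV[R]_n) (lam : nat -> R) : Prop :=
  d 0%N = (- r / norm2 g) *: g /\ lam 0%N = 0 /\
  forall k : nat,
    let b := bvec T g eta (d k) in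
    ((phi D eta b 0 <= r ^+ 2 /\ lam k.+1 = 0) \/
     (r ^+ 2 < phi D eta b 0 /\ 0 < lam k.+1 /\ phi D eta b (lam k.+1) = r ^+ 2)) /\
    d k.+1 = invmx (1%:M + eta *: (D + (lam k.+1)%:M)) *m b.

Definition limit_point (R : realType) (n : nat) (d : nat -> 'cV[R]_n) (lam : nat -> R)
  (ds : 'cV[R]_n) (ls : R) : Prop :=
  forall (eps : R) (N : nat), 0 < eps ->
    exists k : nat, (N <= k)%N /\ norm2 (d k - ds) < eps /\ `|lam k - ls| < eps.

(* KKT point of min_{||d||_2 <= r} g^T d + 1/2 d^T H d. *)
Definition kkt_point (R : realType) (n : nat) (H : 'M[R]_n) (g : 'cV[R]_n) (r : R)
  (ds : 'cV[R]_n) (ls : R) : Prop :=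
  g + (H + ls%:M) *m ds = 0 /\ 0 <= ls /\ norm2 ds <= r /\ ls * (norm2 ds - r) = 0.

From HB Require Import structures.
From mathcomp Require Import all_boot all_order all_algebra.
From mathcomp Require Import classical_sets reals.
From mathcomp Require Import ring lra.
Set Implicit Arguments. Unset Strict Implicit. Unset Printing Implicit Defensive.
Import Order.TTheory GRing.Theory Num.Theory.
Local Open Scope ring_scope.

(* Each step is a KKT condition up to a residual:
   g + (H + lam_{k+1}) d_{k+1} = (T - I/eta) (d_{k+1} - d_k).
   Expanding f around d_{k+2} with this identity gives the descent
   f(d_{k+2}) <= f(d_{k+1}) - (1/eta - |T|/2) |d_{k+2} - d_{k+1}|^2, because D is
   positive semidefinite and lam_{k+2} > 0 forces |d_{k+2}| = r >= |d_{k+1}|.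
   As |T| eta < 2 and f is bounded below on the ball, the steps tend to 0, so the
   residual vanishes along any subsequence converging to (ds, ls); feasibility,
   lam >= 0 and complementarity hold for every iterate and pass to the limit. *)

Section EuclideanGeometry.
Variables (R : realType) (n : nat).
Implicit Types (u v w : 'cV[R]_n) (A : 'M[R]_n).

Definition dot u v : R := (u^T *m v) ord0 ord0.

Lemma dotE u v : dot u v = \sum_i u i ord0 * v i ord0.
Proof. by rewrite /dot mxE; apply: eq_bigr => i _; rewrite mxE. Qed.

Lemma dotC u v : dot u v = dot v u.
Proof. by rewrite !dotE; apply: eq_bigr => i _; rewrite mulrC. Qed.

Lemma dotDr u v w : dot u (v + w) = dot u v + dot u w.
Proof. by rewrite /dot mulmxDr mxE. Qed.

Lemma dot0r u : dot u 0 = 0.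
Proof. by rewrite /dot mulmx0 mxE. Qed.

Lemma dotNr u v : dot u (- v) = - dot u v.
Proof. by rewrite /dot mulmxN mxE. Qed.

Lemma dotBr u v w : dot u (v - w) = dot u v - dot u w.
Proof. by rewrite dotDr dotNr. Qed.

Lemma dotZr (k : R) u v : dot u (k *: v) = k * dot u v.
Proof. by rewrite /dot -scalemxAr mxE. Qed.

Lemma dotDl u v w : dot (u + v) w = dot u w + dot v w.
Proof. by rewrite dotC dotDr !(dotC w). Qed.

Lemma dotBl u v w : dot (u - v) w = dot u w - dot v w.
Proof. by rewrite dotC dotBr !(dotC w). Qed.

Lemma dotZl (k : R) u v : dot (k *: u) v = k * dot u v.
Proof. by rewrite dotC dotZr dotC. Qed.

Lemma dot_mulmxC A u v : A^T = A -> dot u (A *m v) = dot (A *m u) v.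
Proof. by move=> symA; rewrite /dot trmx_mul symA mulmxA. Qed.

Lemma dotvv_ge0 v : 0 <= dot v v.
Proof. by rewrite dotE sumr_ge0 // => i _; rewrite -expr2 sqr_ge0. Qed.

Lemma norm2E v : norm2 v = Num.sqrt (dot v v).
Proof.
by rewrite /norm2 dotE; congr Num.sqrt; apply: eq_bigr => i _; rewrite expr2.
Qed.

Lemma norm2_ge0 v : 0 <= norm2 v.
Proof. exact: sqrtr_ge0. Qed.

Lemma norm2_sqr v : norm2 v ^+ 2 = dot v v.
Proof. by rewrite norm2E sqr_sqrtr ?dotvv_ge0. Qed.

Lemma norm2_eq0 v : norm2 v = 0 -> v = 0.
Proof.
rewrite /norm2 => /eqP; rewrite sqrtr_eq0 => vv_le0.
have v2_eq0 : \sum_i v i ord0 ^+ 2 = 0.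
  by apply/eqP; rewrite eq_le vv_le0 sumr_ge0 // => i _; rewrite sqr_ge0.
apply/matrixP => i j; rewrite ord1 mxE; apply/eqP; rewrite -sqrf_eq0.
by rewrite (psumr_eq0P _ v2_eq0) // => k _; rewrite sqr_ge0.
Qed.

Lemma norm2Z (k : R) v : norm2 (k *: v) = `|k| * norm2 v.
Proof. by rewrite !norm2E dotZl dotZr mulrA -expr2 sqrtrM ?sqr_ge0 // sqrtr_sqr. Qed.

Lemma norm2N v : norm2 (- v) = norm2 v.
Proof. by rewrite -scaleN1r norm2Z normrN1 mul1r. Qed.

Lemma norm2_distC u v : norm2 (u - v) = norm2 (v - u).
Proof. by rewrite -opprB norm2N. Qed.

Lemma dot_CauchySchwarz_sqr u v : dot u v ^+ 2 <= dot u u * dot v v.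
Proof.
have [v0 | v_neq0] := eqVneq v 0.
  by rewrite v0 !dot0r expr0n /= mulr0.
have vv_gt0 : 0 < dot v v.
  rewrite lt_neqAle dotvv_ge0 andbT eq_sym; apply: contra v_neq0 => /eqP vv0.
  by apply/eqP/norm2_eq0; rewrite norm2E vv0 sqrtr0.
(* |<v,v> u - <u,v> v|^2 = <v,v> (<u,u> <v,v> - <u,v>^2) *)
have := dotvv_ge0 (dot v v *: u - dot u v *: v).
by rewrite !(dotBl, dotBr, dotZl, dotZr) [dot v u]dotC; nra.
Qed.

Lemma dot_CauchySchwarz u v : `|dot u v| <= norm2 u * norm2 v.
Proof.
have := dot_CauchySchwarz_sqr u v.
rewrite -!norm2_sqr -exprMn -real_normK ?num_real //.
have := mulr_ge0 (norm2_ge0 u) (norm2_ge0 v); have := normr_ge0 (dot u v); nra.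
Qed.

Lemma ler_norm2D u v : norm2 (u + v) <= norm2 u + norm2 v.
Proof.
have uv := ler_norm (dot u v); have := dot_CauchySchwarz u v.
have := norm2_sqr (u + v); rewrite !(dotDl, dotDr) [dot v u]dotC -!norm2_sqr.
have := norm2_ge0 (u + v); have := norm2_ge0 u; have := norm2_ge0 v; nra.
Qed.

Lemma lerB_norm2_dist u v : norm2 u - norm2 v <= norm2 (u - v).
Proof. by have := ler_norm2D (u - v) v; rewrite subrK; lra. Qed.

Lemma ler_norm2B u v : norm2 (u - v) <= norm2 u + norm2 v.
Proof. by rewrite -(norm2N v) ler_norm2D. Qed.

Lemma dot_subr_ge0 u v : norm2 v <= norm2 u -> 0 <= dot u (u - v).
Proof.
move=> vu; rewrite dotBr -norm2_sqr.
have := ler_norm (dot u v); have := dot_CauchySchwarz u v; have := norm2_ge0 v; nra.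
Qed.

Lemma mulmx_dot_row A v i : (A *m v) i ord0 = dot (row i A)^T v.
Proof. by rewrite dotE mxE; apply: eq_bigr => j _; rewrite !mxE. Qed.

Lemma specnorm_has_sup A :
  has_sup [set norm2 (A *m x) | x in [set x : 'cV[R]_n | norm2 x <= 1]].
Proof.
split; first by exists (norm2 (A *m 0)), 0 => //=; rewrite norm2E dot0r sqrtr0.
set S := \sum_i dot (row i A)^T (row i A)^T.
have S_ge0 : 0 <= S by rewrite sumr_ge0 // => i _; rewrite dotvv_ge0.
exists (Num.sqrt S) => _ [x /= x_le1 <-].
rewrite norm2E ler_sqrt // dotE.
apply: le_trans (_ : S * dot x x <= S); last first.
  by rewrite -norm2_sqr ler_piMr // expr_le1 ?norm2_ge0.
rewrite mulr_suml; apply: ler_sum => i _; rewrite mulmx_dot_row -expr2.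
exact: dot_CauchySchwarz_sqr.
Qed.

Lemma specnorm_ge0 A : 0 <= specnorm A.
Proof.
apply: (sup_upper_bound (specnorm_has_sup A)); exists 0 => /=.
  by rewrite norm2E dot0r sqrtr0.
by rewrite mulmx0 norm2E dot0r sqrtr0.
Qed.

Lemma norm2_mulmx_le A v : norm2 (A *m v) <= specnorm A * norm2 v.
Proof.
have [v0 | v_neq0] := eqVneq (norm2 v) 0.
  by rewrite v0 (norm2_eq0 v0) mulmx0 mulr0 norm2E dot0r sqrtr0.
have v_gt0 : 0 < norm2 v by rewrite lt_neqAle eq_sym v_neq0 norm2_ge0.
have : norm2 (A *m ((norm2 v)^-1 *: v)) <= specnorm A.
  apply: (sup_upper_bound (specnorm_has_sup A)); exists ((norm2 v)^-1 *: v) => //=.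
  by rewrite norm2Z ger0_norm ?invr_ge0 ?norm2_ge0 // mulVf.
rewrite -scalemxAr norm2Z ger0_norm ?invr_ge0 ?norm2_ge0 //.
by rewrite ler_pdivrMl // mulrC.
Qed.

Lemma dot_mulmx_le A v : `|dot v (A *m v)| <= specnorm A * dot v v.
Proof.
apply: le_trans (dot_CauchySchwarz _ _) _; rewrite -norm2_sqr expr2 mulrA.
rewrite [norm2 v * _]mulrC.
by apply: ler_wpM2r; [exact: norm2_ge0 | exact: norm2_mulmx_le].
Qed.

End EuclideanGeometry.

Lemma nonincreasing_bounded_steps (R : realType) (u : nat -> R) (m : R) :
  (forall k, u k.+1 <= u k) -> (forall k, m <= u k) ->
  forall e, 0 < e -> exists N, forall k, (N <= k)%N -> u k - u k.+1 < e.
Proof.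
move=> u_noninc u_ge e e_gt0.
have inf_u : has_inf (range u).
  by split; [exists (u 0%N), 0%N | exists m => _ [k _ <-]].
have [_ [N _ <-] uN_lt] := inf_adherent e_gt0 inf_u.
exists N => k Nk.
have uk_le : u k <= u N by exact: (Order.NatMonotonyTheory.nonincnP u_noninc _ _ Nk).
have : inf (range u) <= u k.+1 by apply: (ge_inf inf_u.2); exists k.+1.
lra.
Qed.

Section Diagonal.
Variables (R : realType) (n : nat) (D : 'M[R]_n).
Hypothesis D_diag : is_diag_nonneg D.
Implicit Types v : 'cV[R]_n.

Lemma diag_nonneg_tr : D^T = D.
Proof.
apply/matrixP => i j; rewrite mxE.
by have [-> // | ij] := eqVneq i j; rewrite !(proj1 D_diag) // eq_sym.
Qed.

Lemma mulmx_diag_nonneg v i : (D *m v) i ord0 = D i i * v i ord0.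
Proof.
rewrite mxE (bigD1 i) //= big1 ?addr0 // => j ji.
by rewrite (proj1 D_diag) 1?eq_sym // mul0r.
Qed.

Lemma dot_diag_nonneg_ge0 v : 0 <= dot v (D *m v).
Proof.
rewrite dotE sumr_ge0 // => i _; rewrite mulmx_diag_nonneg mulrCA -expr2.
by rewrite mulr_ge0 ?sqr_ge0 ?(proj2 D_diag).
Qed.

Lemma shift_mx_diag (eta l : R) :
  1%:M + eta *: (D + l%:M) = diag_mx (\row_i (1 + eta * (D i i + l))).
Proof.
apply/matrixP => i j; rewrite !mxE.
have [<- | ij] := eqVneq i j; first by rewrite !mulr1n.
by rewrite !mulr0n (proj1 D_diag) // add0r addr0 mulr0.
Qed.

Lemma shift_mx_coef_gt0 (eta l : R) i :
  0 <= eta -> 0 <= l -> 0 < 1 + eta * (D i i + l).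
Proof.
move=> eta_ge0 l_ge0; have := mulr_ge0 eta_ge0 (addr_ge0 (proj2 D_diag i) l_ge0).
lra.
Qed.

Lemma shift_mx_unit (eta l : R) :
  0 <= eta -> 0 <= l -> 1%:M + eta *: (D + l%:M) \in unitmx.
Proof.
move=> eta_ge0 l_ge0; rewrite shift_mx_diag unitmxE det_diag unitfE.
by apply/prodf_neq0 => i _; rewrite mxE gt_eqF ?shift_mx_coef_gt0.
Qed.

End Diagonal.

Definition objective (R : realType) (n : nat) (H : 'M[R]_n) (g x : 'cV[R]_n) : R :=
  dot g x + dot x (H *m x) / 2.

Lemma objectiveB (R : realType) (n : nat) (H : 'M[R]_n) (g u w : 'cV[R]_n) :
  H^T = H ->
  objective H g u - objective H g (u - w) = dot (g + H *m u) w - dot w (H *m w) / 2.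
Proof.
move=> symH; rewrite /objective mulmxBr !(dotBl, dotBr, dotDl) !(dot_mulmxC u) //.
rewrite [dot (H *m u) w]dotC [dot g w]dotC; lra.
Qed.

Lemma objective_ge (R : realType) (n : nat) (D T : 'M[R]_n) (g x : 'cV[R]_n) (r : R) :
  is_diag_nonneg D -> norm2 x <= r ->
  - (norm2 g * r + specnorm T * r ^+ 2 / 2) <= objective (D + T) g x.
Proof.
move=> D_diag x_le; have x_ge0 := norm2_ge0 x.
have g_term : - (norm2 g * r) <= dot g x.
  have := ler_wpM2l (norm2_ge0 g) x_le; have := dot_CauchySchwarz g x.
  by have := ler_norm (- dot g x); rewrite normrN; lra.
have T_term : - (specnorm T * r ^+ 2) <= dot x (T *m x).
  have : dot x x <= r ^+ 2 by rewrite -norm2_sqr ler_pXn2r ?nnegrE //; lra.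
  move/(ler_wpM2l (specnorm_ge0 T)); have := dot_mulmx_le T x.
  by have := ler_norm (- dot x (T *m x)); rewrite normrN; lra.
rewrite /objective mulmxDl dotDr.
by have := dot_diag_nonneg_ge0 D_diag x; lra.
Qed.

Section Iterates.
Variables (R : realType) (n : nat) (D T : 'M[R]_n) (g : 'cV[R]_n) (r eta : R).
Variables (d : nat -> 'cV[R]_n) (lam : nat -> R).
Hypotheses (D_diag : is_diag_nonneg D) (eta_gt0 : 0 < eta).
Hypotheses (r_ge0 : 0 <= r) (iter : aie_iterates D T g r eta d lam).

Lemma iterate_lam_ge0 k : 0 <= lam k.
Proof.
case: iter => _ [lam0 step]; case: k => [|k]; first by rewrite lam0.
by case: (step k) => [[[_ ->] | [_ [/ltW ? _]]] _].
Qed.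

Lemma iterate_step k :
  d k.+1 + eta *: ((D + (lam k.+1)%:M) *m d k.+1) = bvec T g eta (d k).
Proof.
case: iter => _ [_ /(_ k) [_ ->]].
rewrite -{1}[invmx _ *m _]mul1mx scalemxAl -mulmxDl mulKVmx //.
exact: shift_mx_unit (ltW eta_gt0) (iterate_lam_ge0 k.+1).
Qed.

Lemma iterate_coord k i :
  d k.+1 i ord0 = bvec T g eta (d k) i ord0 / (1 + eta * (D i i + lam k.+1)).
Proof.
have c_gt0 := shift_mx_coef_gt0 D_diag i (ltW eta_gt0) (iterate_lam_ge0 k.+1).
have := iterate_step k; rewrite -{1}[d k.+1]mul1mx scalemxAl -mulmxDl.
rewrite shift_mx_diag // => /matrixP /(_ i ord0); rewrite mul_diag_mx !mxE => <-.
by rewrite mulrC mulKf ?gt_eqF.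
Qed.

Lemma dot_iterate k :
  dot (d k.+1) (d k.+1) = phi D eta (bvec T g eta (d k)) (lam k.+1).
Proof. by rewrite dotE /phi; apply: eq_bigr => i _; rewrite iterate_coord -expr2. Qed.

Lemma norm2_iterate_le k : norm2 (d k.+1) <= r.
Proof.
rewrite -(ger0_norm r_ge0) norm2E -sqrtr_sqr ler_sqrt ?sqr_ge0 // dot_iterate.
by case: iter => _ [_ /(_ k) [[[? ->] | [_ [_ ->]]] _]].
Qed.

Lemma norm2_iterate_eq k : 0 < lam k.+1 -> norm2 (d k.+1) = r.
Proof.
rewrite -(ger0_norm r_ge0) norm2E -sqrtr_sqr dot_iterate.
by case: iter => _ [_ /(_ k) [[[_ ->] | [_ [_ ->]]] _]]; rewrite ?ltxx.
Qed.

Lemma iterate_residual k :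
  g + (D + T + (lam k.+1)%:M) *m d k.+1 =
  T *m (d k.+1 - d k) - eta^-1 *: (d k.+1 - d k).
Proof.
apply: (scalerI (lt0r_neq0 eta_gt0)).
have := iterate_step k; rewrite /bvec addrAC mulmxDl scalerDr => step.
rewrite scalerBr scalerA mulfV ?lt0r_neq0 // scale1r mulmxBr addrAC !mulmxDl.
apply/matrixP => i j; move/matrixP/(_ i j): step; rewrite !mxE => step.
lra.
Qed.

Hypothesis T_sym : T^T = T.

Lemma objective_iterate_descent k :
  objective (D + T) g (d k.+2) <= objective (D + T) g (d k.+1)
    - (eta^-1 - specnorm T / 2) * dot (d k.+2 - d k.+1) (d k.+2 - d k.+1).
Proof.
set u := d k.+2; set v := d k.+1; set w := u - v; set l := lam k.+2.
have H_sym : (D + T)^T = D + T by rewrite linearD /= diag_nonneg_tr // T_sym.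
have residual : g + (D + T) *m u = T *m w - eta^-1 *: w - l *: u.
  rewrite -(iterate_residual k.+1) -/u -/l [(D + T + _) *m _]mulmxDl.
  by rewrite mul_scalar_mx addrA addrK.
have l_uw_ge0 : 0 <= l * dot u w.
  have [l_le0 | l_gt0] := leP l 0.
    suff -> : l = 0 by rewrite mul0r.
    by apply/eqP; rewrite eq_le l_le0 iterate_lam_ge0.
  apply: mulr_ge0; first exact: ltW.
  apply: dot_subr_ge0.
  by rewrite /u (norm2_iterate_eq l_gt0) norm2_iterate_le.
have := objectiveB g u w H_sym; rewrite {1}/w subKr; clearbody w.
rewrite residual !(dotBl, dotZl) mulmxDl dotDr [dot (T *m w) w]dotC.
have := dot_diag_nonneg_ge0 D_diag w.
have := ler_norm (dot w (T *m w)); have := dot_mulmx_le T w.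
lra.
Qed.

Hypothesis eta_T_small : specnorm T * eta < 2.

Lemma iterate_steps_vanish e : 0 < e ->
  exists N, forall k, (N <= k)%N -> norm2 (d k.+2 - d k.+1) < e.
Proof.
move=> e_gt0; set c := eta^-1 - specnorm T / 2.
have c_gt0 : 0 < c by rewrite subr_gt0 ltr_pdivrMr // mulrC ltr_pdivlMr.
have descent k := objective_iterate_descent k; rewrite -/c in descent.
have f_noninc k : objective (D + T) g (d k.+2) <= objective (D + T) g (d k.+1).
  have := mulr_ge0 (ltW c_gt0) (dotvv_ge0 (d k.+2 - d k.+1)).
  by have := descent k; lra.
have f_ge k := objective_ge T g D_diag (norm2_iterate_le k).
have cee_gt0 : 0 < c * (e * e) by rewrite !mulr_gt0.
have [N gap] := nonincreasing_bounded_steps f_noninc f_ge cee_gt0.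
exists N => k /gap; have := descent k; rewrite -norm2_sqr => dk gapk.
have : norm2 (d k.+2 - d k.+1) ^+ 2 < e * e by rewrite -(ltr_pM2l c_gt0); lra.
have := norm2_ge0 (d k.+2 - d k.+1); nra.
Qed.

Variables (ds : 'cV[R]_n) (ls : R).
Hypothesis limit : limit_point d lam ds ls.

Lemma limit_lam_ge0 : 0 <= ls.
Proof.
rewrite leNgt; apply/negP => ls_lt0; have nls_gt0 : 0 < - ls by rewrite oppr_gt0.
have [k [_ [_]]] := limit 0 nls_gt0.
by rewrite ltr_norml; have := iterate_lam_ge0 k; lra.
Qed.

Lemma limit_norm2_le : norm2 ds <= r.
Proof.
apply/ler_addgt0Pr => e e_gt0; have [[|k] [// _ [dk _]]] := limit 1 e_gt0.
have := lerB_norm2_dist ds (d k.+1); rewrite norm2_distC.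
by have := norm2_iterate_le k; lra.
Qed.

Lemma limit_complementarity : ls * (norm2 ds - r) = 0.
Proof.
have [-> | ls_neq0] := eqVneq ls 0; first by rewrite mul0r.
have ls_gt0 : 0 < ls by rewrite lt_neqAle eq_sym ls_neq0 limit_lam_ge0.
suff -> : norm2 ds = r by rewrite subrr mulr0.
apply/eqP; rewrite eq_le limit_norm2_le /=; apply/ler_addgt0Pr => e e_gt0.
have emin_gt0 : 0 < Num.min e ls by rewrite lt_min e_gt0.
have [[|k] [// _ [dk lk]]] := limit 1 emin_gt0.
have min_le_e : Num.min e ls <= e by rewrite ge_min lexx.
have min_le_ls : Num.min e ls <= ls by rewrite ge_min lexx orbT.
move: lk; rewrite ltr_norml => /andP[lk _].
have lam_gt0 : 0 < lam k.+1 by lra.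
by have := lerB_norm2_dist (d k.+1) ds; rewrite norm2_iterate_eq //; lra.
Qed.

Lemma limit_stationary : g + (D + T + ls%:M) *m ds = 0.
Proof.
apply: norm2_eq0; apply/eqP; rewrite eq_le norm2_ge0 andbT.
apply/ler_addgt0Pr => e e_gt0; rewrite add0r.
set M := D + T + ls%:M; set C := specnorm T + eta^-1 + specnorm M + r.
have C_gt0 : 0 < C.
  have := specnorm_ge0 T; have := specnorm_ge0 M; have := invr_gt0 eta.
  have := r_ge0; rewrite eta_gt0 /C; lra.
have e'_gt0 : 0 < e / C by rewrite divr_gt0.
have [N small] := iterate_steps_vanish e'_gt0.
have [[|[|j]] [// Nj [dk lk]]] := limit N.+2 e'_gt0.
set u := d j.+2; set w : 'cV[R]_n := u - d j.+1; set l := lam j.+2.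
have -> : g + M *m ds = (T *m w - eta^-1 *: w) + M *m (ds - u) + (ls - l) *: u.
  rewrite -(iterate_residual j.+1) mulmxBr /M !mulmxDl !mul_scalar_mx.
  by apply/matrixP => i i'; rewrite !mxE /u /l; lra.
have w_le : norm2 w <= e / C by apply/ltW/small.
have residual_le : norm2 (T *m w - eta^-1 *: w) <= (specnorm T + eta^-1) * (e / C).
  apply: le_trans (ler_norm2B _ _) _.
  rewrite norm2Z ger0_norm ?invr_ge0 ?(ltW eta_gt0) // mulrDl.
  apply: lerD; last by rewrite ler_wpM2l ?invr_ge0 ?(ltW eta_gt0).
  by apply: le_trans (norm2_mulmx_le _ _) _; rewrite ler_wpM2l ?specnorm_ge0.
have middle_le : norm2 (M *m (ds - u)) <= specnorm M * (e / C).
  apply: le_trans (norm2_mulmx_le _ _) _.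
  by rewrite ler_wpM2l ?specnorm_ge0 // norm2_distC ltW.
have last_le : norm2 ((ls - l) *: u) <= e / C * r.
  rewrite norm2Z; apply: ler_pM; rewrite ?normr_ge0 ?norm2_ge0 //.
    by rewrite distrC ltW.
  exact: norm2_iterate_le.
apply: le_trans (ler_norm2D _ _) _; apply: le_trans (lerD (ler_norm2D _ _) last_le) _.
have : (specnorm T + eta^-1) * (e / C) + specnorm M * (e / C) + e / C * r = e.
  by rewrite [e / C * r]mulrC -!mulrDl mulrC divfK ?gt_eqF.
lra.
Qed.

End Iterates.

Theorem mainTheorem7 (R : realType) (n : nat) (D T : 'M[R]_n) (g : 'cV[R]_n)
  (r a eta eta_min : R) (d : nat -> 'cV[R]_n) (lam : nat -> R) :
  (1 <= n)%N -> 0 < r -> g != 0 ->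
  is_diag_nonneg D -> T^T = T ->
  0 < a -> 0 < eta_min -> eta_min <= eta -> eta <= 1 / (specnorm T + 2 * a) ->
  aie_iterates D T g r eta d lam ->
  forall (ds : 'cV[R]_n) (ls : R),
    limit_point d lam ds ls -> kkt_point (D + T) g r ds ls.
Proof.
move=> _ r_gt0 _ D_diag T_sym a_gt0 eta_min_gt0 eta_min_le eta_le iter ds ls lim.
have eta_gt0 : 0 < eta := lt_le_trans eta_min_gt0 eta_min_le.
have S_ge0 := specnorm_ge0 T.
have eta_T_small : specnorm T * eta < 2.
  by move: eta_le; rewrite ler_pdivlMr; [nra | lra].
have r_ge0 := ltW r_gt0.
split.
  exact: (limit_stationary D_diag eta_gt0 r_ge0 iter T_sym eta_T_small lim).
split; first exact: (limit_lam_ge0 iter lim).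
split; first exact: (limit_norm2_le D_diag eta_gt0 r_ge0 iter lim).
exact: (limit_complementarity D_diag eta_gt0 r_ge0 iter lim).
Qed.
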